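(* The triple $(\mathcal{APT},[\cdot,\cdot],\rhd)$ is a post-Lie algebra. That is, $[\cdot,\cdot]$ is a Lie bracket on $\mathcal{APT}$, and for all $X,Y,Z \in \mathcal{APT}$: \[ X\rhd[Y,Z]=[X\rhd Y,Z]+[Y,X\rhd Z], \] \[ [X,Y]\rhd Z=X\rhd(Y\rhd Z)-(X\rhd Y)\rhd Z-Y\rhd(X\rhd Z)+(Y\rhd X)\rhd Z. \]
   Context: Work over a fixed ground field. A planar rooted tree is a finite rooted tree, with edges oriented away from the root, together with a total order on the outgoing edges of each vertex; $\mathcal{PT}$ is the span of isomorphism classes of planar rooted trees. $\mathrm{Lie}(\mathcal{PT})$ is the free Lie algebra on $\mathcal{PT}$, with bracket $[\cdot,\cdot]$. For planar trees $t_1,t_2$, $t_1\rhd t_2$ is the sum, over all vertices $v$ of $t_2$, of the planar tree obtained by adding an edge from $v$ to the root of $t_1$ as the leftmost outgoing edge of $v$. It is extended to $\mathrm{Lie}(\mathcal{PT})$ by the rules \[ t_1\rhd[t_2,t_3]=[t_1\rhd t_2,t_3]+[t_2,t_1\rhd t_3], \] \[ [t_1,t_2]\rhd t_3=t_1\rhd(t_2\rhd t_3)-(t_1\rhd t_2)\rhd t_3-t_2\rhd(t_1\rhd t_3)+(t_2\rhd t_1)\rhd t_3. \] A planar aroma is an isomorphism class of finite connected directed graphs (loops allowed) in which every vertex has exactly one incoming edge, together with a total order on the outgoing edges at each vertex. $\mathcal{PA}$ is their span and $S(\mathcal{PA})$ is the symmetric algebra on $\mathcal{PA}$. For a planar tree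 $t$ and a monomial $\alpha\in S(\mathcal{PA})$, $\rho(t)(\alpha)$ is the sum, over all vertices $v$ of all factors of $\alpha$, of the monomial obtained by adding an edge from $v$ to the root of $t$ as the leftmost outgoing edge of $v$; this is extended linearly in $\alpha$. For Lie polynomials, \[ \rho([t_1,t_2])=\rho(t_1)\rho(t_2)-\rho(t_1\rhd t_2)-\rho(t_2)\rho(t_1)+\rho(t_2\rhd t_1). \] Set $\mathcal{APT}=S(\mathcal{PA})\otimes \mathrm{Lie}(\mathcal{PT})$, with elements written $\alpha t$. Define, for $\alpha_i\in S(\mathcal{PA})$ and $t_i\in\mathrm{Lie}(\mathcal{PT})$ (extended bilinearly): \[ [\alpha_1t_1,\alpha_2t_2]=\alpha_1\alpha_2[t_1,t_2], \] \[ \alpha_1t_1\rhd\alpha_2t_2=\alpha_1\,\rho(t_1)(\alpha_2)\,t_2+\alpha_1\alpha_2\,(t_1\rhd t_2). \] *)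

From HB Require Import structures.
From mathcomp Require Import all_boot all_order all_algebra.
From mathcomp Require Import finmap multiset.
From mathcomp.multinomials Require Import monalg.
Set Implicit Arguments. Unset Strict Implicit. Unset Printing Implicit Defensive.
Import GRing.Theory.

(* Planar rooted trees.  Isomorphism classes of planar rooted trees    *)
(* are exactly the terms of this inductive type: a root together with  *)
(* the ordered (left-to-right) list of the subtrees of its children.   *)
Inductive ptree : Type := PNode of seq ptree.

Fixpoint pt2g (t : ptree) : GenTree.tree unit :=
  let: PNode s := t in GenTree.Node 0 (map pt2g s).
Fixpoint g2pt (g : GenTree.tree unit) : ptree :=
  match g with GenTree.Leaf _ => PNode [::] | GenTree.Node _ s => PNode (map g2pt s) end.
Fixpoint pt2gK (t : ptree) : g2pt (pt2g t) = t :=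
  match t return g2pt (pt2g t) = t with
  | PNode s => f_equal PNode
     ((fix F (s : seq ptree) : map g2pt (map pt2g s) = s :=
        match s return map g2pt (map pt2g s) = s with
        | [::] => erefl
        | x :: s' => f_equal2 cons (pt2gK x) (F s') end) s) end.
HB.instance Definition _ := Countable.copy ptree (can_type pt2gK).

(* graft a t : the list (with multiplicities) of the planar trees obtained
   by adding an edge from a vertex v of t to the root of a, as the leftmost
   outgoing edge of v, v ranging over all vertices of t. *)
Fixpoint graft (a t : ptree) : seq ptree :=
  let: PNode s := t in
  PNode (a :: s) ::
  map PNode ((fix gs (s : seq ptree) : seq (seq ptree) :=
                match s with
                | [::] => [::]
                | c :: s' => [seq x :: s' | x <- graft a c] ++ [seq c :: y | y <- gs s']
                end) s).

Fixpoint graft_forest (a : ptree) (s : seq ptree) : seq (seq ptree) :=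
  match s with
  | [::] => [::]
  | c :: s' => [seq x :: s' | x <- graft a c] ++ [seq c :: y | y <- graft_forest a s']
  end.

(* Planar aromas.  A planar aroma (connected graph, every vertex has    *)
(* exactly one incoming edge, ordered outgoing edges) consists of a     *)
(* unique directed cycle v_1 -> v_2 -> ... -> v_n -> v_1 (n >= 1, n = 1 *)
(* is a loop) with planar trees hanging from the cycle vertices.  A     *)
(* cycle vertex is encoded by (l, r): the outgoing edges of v_i are, in *)
(* order, the edges to the roots of the trees of l, then the cycle edge *)
(* v_i -> v_(i+1), then the edges to the roots of the trees of r.       *)
(* A raw aroma is the nonempty list [v_1; ...; v_n]; two raw aromas     *)
(* give isomorphic planar aromas iff they are rotations of each other. *)
Definition avert := (seq ptree * seq ptree)%type.
Definition raroma := seq avert.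

Definition rotations (a : raroma) : seq raroma :=
  [seq rot i a | i <- iota 0 (size a).+1].

Definition canon (a : raroma) : raroma := choose (fun b => b \in rotations a) a.

Lemma rot_in_rotations n a : rot n a \in rotations a.
Proof.
rewrite rot_minn; apply/mapP; exists (minn n (size a)) => //.
by rewrite mem_iota add0n ltnS geq_minr.
Qed.

Lemma rotations_rot n a : rotations (rot n a) =i rotations a.
Proof.
move=> b; apply/idP/idP => /mapP [i _ ->].
  by rewrite rot_rot_add rot_in_rotations.
rewrite (rot_minn n a); set m := minn _ _.
have E : rot i a = rot i (rot (size a - m) (rot m a)).
  by rewrite -[X in rot i X = _](rotK m a) /rotr size_rot.
by rewrite E rot_rot_add rot_in_rotations.
Qed.

Lemma canon_rot n a : canon (rot n a) = canon a.
Proof.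
rewrite /canon (@eq_choose _ _ (fun b => b \in rotations a)); last first.
  by move=> b; rewrite rotations_rot.
apply: choose_id; first exact: rot_in_rotations.
by rewrite -{1}(rot0 a) rot_in_rotations.
Qed.

Lemma canon_is_rot a : exists n, canon a = rot n a.
Proof.
have : canon a \in rotations a.
  by apply: (@chooseP _ (fun b => b \in rotations a)); rewrite -{1}(rot0 a) rot_in_rotations.
by case/mapP => i _ ->; exists i.
Qed.

Lemma canon_ok (v : avert) (a : raroma) :
  (canon (v :: a) != [::]) && (canon (canon (v :: a)) == canon (v :: a)).
Proof.
have [n E] := canon_is_rot (v :: a).
by rewrite {2}E canon_rot eqxx andbT E -size_eq0 size_rot.
Qed.

Definition aroma := {a : raroma | (a != [::]) && (canon a == a)}.

Definition aroma_of (v : avert) (a : raroma) : aroma :=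
  exist _ (canon (v :: a)) (canon_ok v a).

Definition graft_vert (a : ptree) (v : avert) : seq avert :=
  (a :: v.1, v.2) :: [seq (l, v.2) | l <- graft_forest a v.1]
                  ++ [seq (v.1, r) | r <- graft_forest a v.2].

Fixpoint graft_cycle (a : ptree) (c : raroma) : seq raroma :=
  match c with
  | [::] => [::]
  | v :: c' => [seq w :: c' | w <- graft_vert a v] ++ [seq v :: d | d <- graft_cycle a c']
  end.

(* words of planar trees (basis of the tensor algebra T(PT)) *)
Definition word := seq ptree.
HB.instance Definition _ := Choice.on word.

Lemma word_unitm (x y : word) : x ++ y = [::] -> x = [::] /\ y = [::].
Proof. by case: x; case: y. Qed.
HB.instance Definition _ := Choice_isMonomialDef.Build word
  (@catA _) (@cat0s _) (@cats0 _) word_unitm.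

(* monomials of the symmetric algebra S(PA): multisets of planar aromas *)
Definition amono := {mset aroma}%mset.
HB.instance Definition _ := Choice.on amono.

Lemma amono_unitm (x y : amono) :
  (x `+` y)%mset = mset0 -> x = mset0 /\ y = mset0.
Proof.
move=> /msetP H; split; apply/msetP => b; have := H b;
by rewrite msetE2 !mset0E => /eqP; rewrite addn_eq0 => /andP [/eqP ? /eqP ?].
Qed.
HB.instance Definition _ := Choice_isMonomialDef.Build amono
  (@msetDA _) (@mset0D _) (@msetD0 _) amono_unitm.

(* monomials of S(PA) (x) T(PT) *)
Definition apmono := (amono * word)%type.
HB.instance Definition _ := Choice.on apmono.

Definition apmul (x y : apmono) : apmono := ((x.1 `+` y.1)%mset, x.2 ++ y.2).
Lemma apmulA : associative apmul.
Proof. by move=> x y z; rewrite /apmul /= msetDA catA. Qed.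
Lemma ap1m : left_id (mset0, [::]) apmul.
Proof. by case=> a b; rewrite /apmul /= mset0D. Qed.
Lemma apm1 : right_id (mset0, [::]) apmul.
Proof. by case=> a b; rewrite /apmul /= msetD0 cats0. Qed.
Lemma ap_unitm (x y : apmono) : apmul x y = (mset0, [::]) ->
  x = (mset0, [::]) /\ y = (mset0, [::]).
Proof.
case: x y => [a b] [c d] [] /amono_unitm [-> ->] /word_unitm [-> ->]; by [].
Qed.
HB.instance Definition _ := Choice_isMonomialDef.Build apmono apmulA ap1m apm1 ap_unitm.

Section Spaces.
Variable k : fieldType.
Local Open Scope ring_scope.

(* T(PT): free associative algebra on PT (concatenation product);     *)
(* Lie(PT) is realised inside it as the Lie polynomials.              *)
Definition TPT := {malg k[word]}.
Definition SPA := {malg k[amono]}.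
Definition VAPT := {malg k[apmono]}.

Definition tree_el (t : ptree) : TPT := << [:: t] >>.

Definition tbr (X Y : TPT) : TPT := X * Y - Y * X.

(* Lie(PT) = the smallest subspace of T(PT) containing the trees and   *)
(* closed under the commutator: the free Lie algebra on PT.            *)
Inductive isLie : TPT -> Prop :=
| isLie_tree t : isLie (tree_el t)
| isLie_zero : isLie 0
| isLie_lin a X Y : isLie X -> isLie Y -> isLie (a *: X + Y)
| isLie_br X Y : isLie X -> isLie Y -> isLie (tbr X Y).

Definition graftT (t1 t2 : ptree) : TPT := \sum_(s <- graft t1 t2) tree_el s.

(* rho(t)(m) for a planar tree t and a monomial m of S(PA): sum over all *)
(* factors of m (with multiplicity) and all vertices of that factor.     *)
Definition rho_tree (t : ptree) (m : amono) : SPA :=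
  \sum_(a <- enum_mset m)
     \sum_(b <- graft_cycle t (val a))
        (if b is v :: b' then << ((m `\ a) `+` [mset aroma_of v b'])%mset >> else 0).

(* The defining properties of |> on Lie(PT) and of rho, as given in the  *)
(* paper: bilinear, given on trees by grafting, and extended to Lie      *)
(* polynomials by the stated rules.  These determine both operations     *)
(* uniquely on Lie(PT).                                                  *)
Definition grafting_ops (gr : TPT -> TPT -> TPT) (rho : TPT -> SPA -> SPA) : Prop :=
  (forall a X Y Z, gr (a *: X + Y) Z = a *: gr X Z + gr Y Z /\
                       gr Z (a *: X + Y) = a *: gr Z X + gr Z Y) /\
  (forall t1 t2, gr (tree_el t1) (tree_el t2) = graftT t1 t2) /\
  (forall X Y Z, isLie X -> isLie Y -> isLie Z ->
          gr X (tbr Y Z) = tbr (gr X Y) Z + tbr Y (gr X Z)) /\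
  (forall X Y Z, isLie X -> isLie Y -> isLie Z ->
          gr (tbr X Y) Z = gr X (gr Y Z) - gr (gr X Y) Z - gr Y (gr X Z) + gr (gr Y X) Z) /\
  (forall a X Y al, rho (a *: X + Y) al = a *: rho X al + rho Y al /\
                        rho X (a *: al) = a *: rho X al /\
                        (forall be, rho X (al + be) = rho X al + rho X be)) /\
  (forall t m, rho (tree_el t) << m >> = rho_tree t m) /\
  (forall X Y al, isLie X -> isLie Y ->
          rho (tbr X Y) al = rho X (rho Y al) - rho (gr X Y) al
                             - rho Y (rho X al) + rho (gr Y X) al).

(* alpha t in APT = S(PA) (x) Lie(PT), realised inside S(PA) (x) T(PT) *)
Definition tens (al : SPA) (X : TPT) : VAPT :=
  \sum_(p <- msupp al) \sum_(q <- msupp X) (al@_p * X@_q) *: << (p, q) : apmono >>.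

Definition inAPT (Z : VAPT) : Prop :=
  exists s : seq (SPA * TPT),
    (forall x, x \in s -> isLie x.2) /\ Z = \sum_(x <- s) tens x.1 x.2.

(* [alpha1 t1, alpha2 t2] = alpha1 alpha2 [t1, t2] *)
Definition vbr (Z1 Z2 : VAPT) : VAPT := Z1 * Z2 - Z2 * Z1.

Definition vgr (gr : TPT -> TPT -> TPT) (rho : TPT -> SPA -> SPA) (Z1 Z2 : VAPT) : VAPT :=
  \sum_(p <- msupp Z1) \sum_(q <- msupp Z2)
     (Z1@_p * Z2@_q) *:
       (tens (<< p.1 >> * rho << p.2 >> << q.1 >>) << q.2 >>
        + tens (<< p.1 >> * << q.1 >>) (gr << p.2 >> << q.2 >>)).

End Spaces.

Local Open Scope ring_scope.
Definition is_post_Lie (R : ringType) (U : lmodType R) (P : U -> Prop)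
    (br gr : U -> U -> U) : Prop :=
  (P 0 /\ (forall a x y, P x -> P y -> P (a *: x + y))) /\
  (forall x y, P x -> P y -> P (br x y) /\ P (gr x y)) /\
  (forall a x y z, P x -> P y -> P z ->
         [/\ br (a *: x + y) z = a *: br x z + br y z,
             br z (a *: x + y) = a *: br z x + br z y,
             gr (a *: x + y) z = a *: gr x z + gr y z &
             gr z (a *: x + y) = a *: gr z x + gr z y]) /\
  (forall x, P x -> br x x = 0) /\
  (forall x y z, P x -> P y -> P z ->
         br x (br y z) + br y (br z x) + br z (br x y) = 0) /\
  (forall x y z, P x -> P y -> P z ->
         gr x (br y z) = br (gr x y) z + br y (gr x z)) /\
  (forall x y z, P x -> P y -> P z ->
         gr (br x y) z = gr x (gr y z) - gr (gr x y) z - gr y (gr x z) + gr (gr y x) z).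

(* The bracket of APT is the commutator of the associative algebra S(PA) (x) T(PT),
   so it is a Lie bracket, and APT, the span of the pure tensors a X with X a Lie
   polynomial, is closed under it.  All operations are bilinear, so the two post-Lie
   identities only have to be checked on pure tensors, where
     a X |> b Y = a rho_X(b) Y + a b (X |> Y).
   Expanding both sides, the identities reduce to the post-Lie identities of
   (Lie(PT), [,], |>), to the rule giving rho on brackets, and to the fact that every
   rho_X is a derivation of the commutative algebra S(PA).  That fact, and the closure
   of Lie(PT) under |>, are proved by induction on the number of trees in a Lie
   monomial: X |> - does not increase it, and rho_t is a derivation for a tree t
   because grafting onto a monomial sums over its factors. *)

From HB Require Import structures.
From mathcomp Require Import all_boot all_order all_algebra.
From mathcomp Require Import finmap multiset.
From mathcomp.multinomials Require Import monalg.
From mathcomp Require Import ring zify.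
Set Implicit Arguments. Unset Strict Implicit. Unset Printing Implicit Defensive.
Import GRing.Theory.
Local Open Scope ring_scope.

HB.instance Definition _ := MonomialDef_isConomialDef.Build amono (@msetDC _).

Lemma addr_alternating4D (V : zmodType) (a b c d a' b' c' d' : V) :
  (a + a') - (b + b') - (c + c') + (d + d') = (a - b - c + d) + (a' - b' - c' + d').
Proof. by rewrite !opprD [a + a' + _]addrACA [_ + (- c - c')]addrACA [LHS]addrACA. Qed.

Lemma commutator_jacobi (R : pzRingType) (x y z : R) :
  let br a b := a * b - b * a in br x (br y z) + br y (br z x) + br z (br x y) = 0.
Proof.
rewrite /= !mulrBr !mulrBl !mulrA !opprB !addrA !subrK.
rewrite [_ - y * x * z + _]addrAC [_ + z * y * x + _]addrAC subrK.
by rewrite [_ - y * x * z - _]addrAC addrK subrK subrr.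
Qed.

Lemma linear_comp (R : nzRingType) (U V W : lmodType R) (f : V -> W) (g : U -> V) :
  linear f -> linear g -> linear (fun x => f (g x)).
Proof. by move=> fL gL c x y; rewrite gL fL. Qed.

Lemma linear_add (R : nzRingType) (U V : lmodType R) (f g : U -> V) :
  linear f -> linear g -> linear (fun x => f x + g x).
Proof. by move=> fL gL c x y; rewrite fL gL scalerDr addrACA. Qed.

Definition derivation (R : pzRingType) (D : R -> R) :=
  forall a b, D (a * b) = D a * b + a * D b.

Lemma derivation_commutator_combination (R : comPzRingType) (D1 D2 D3 D4 : R -> R) :
  {morph D1 : x y / x + y} -> {morph D2 : x y / x + y} ->
  derivation D1 -> derivation D2 -> derivation D3 -> derivation D4 ->
  derivation (fun x => D1 (D2 x) - D3 x - D2 (D1 x) + D4 x).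
Proof.
move=> D1D D2D d1 d2 d3 d4 a b /=.
rewrite d2 D1D !d1 D2D !d2 d3 d4; ring.
Qed.

Definition additive3 (V : zmodType) (F : V -> V -> V -> V) :=
  [/\ forall x1 x2 y z, F (x1 + x2) y z = F x1 y z + F x2 y z,
      forall x y1 y2 z, F x (y1 + y2) z = F x y1 z + F x y2 z &
      forall x y z1 z2, F x y (z1 + z2) = F x y z1 + F x y z2].

Section PostLieSidesAdditive.
Variables (R : nzRingType) (V : lmodType R) (br gr : {bilinear V -> V -> V}).

Lemma additive3_derivation_lhs : additive3 (fun x y z => gr x (br y z)).
Proof. by split=> *; rewrite !(linearDl, linearDr). Qed.

Lemma additive3_derivation_rhs :
  additive3 (fun x y z => br (gr x y) z + br y (gr x z)).
Proof. by split=> *; rewrite !(linearDl, linearDr) addrACA. Qed.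

Lemma additive3_bracket_lhs : additive3 (fun x y z => gr (br x y) z).
Proof. by split=> *; rewrite !(linearDl, linearDr). Qed.

Lemma additive3_bracket_rhs : additive3 (fun x y z =>
  gr x (gr y z) - gr (gr x y) z - gr y (gr x z) + gr (gr y x) z).
Proof. by split=> *; rewrite !(linearDl, linearDr) addr_alternating4D. Qed.

End PostLieSidesAdditive.

Lemma malg_scalerAr (R : comNzRingType) (K : monomType) c (x y : {malg R[K]}) :
  c *: (x * y) = x * (c *: y).
Proof.
have xC : x * c%:MP = c *: x.
  rewrite malgM_def fgmulgU malgZ_def; apply: eq_bigr => m _.
  by rewrite mulm1 mulrC.
by rewrite -[c *: y]mul_malgC mulrA xC scalerAl.
Qed.

Lemma monalgUM (R : nzRingType) (K : monomType) (p q : K) :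
  << p >> * << q >> = << mmul p q >> :> {malg R[K]}.
Proof. by rewrite malgM_def fgmulUU mulr1. Qed.

Section MalgLinear.
Variables (R : comNzRingType) (V : lmodType R).

Lemma monalgUZ (K : choiceType) (c : R) (p : K) : << c *g p >> = c *: << p >>.
Proof. by apply/malgP => q; rewrite mcoeffZ !mcoeffU mulr_natr. Qed.

Lemma malg_linear_ext (K : choiceType) (f g : {malg R[K]} -> V) :
  linear f -> linear g -> (forall p, f << p >> = g << p >>) -> f =1 g.
Proof.
move=> fL gL fg x.
pose F : {linear {malg R[K]} -> V} := HB.pack f (GRing.isLinear.Build _ _ _ _ f fL).
pose G : {linear {malg R[K]} -> V} := HB.pack g (GRing.isLinear.Build _ _ _ _ g gL).
change (F x = G x); rewrite (monalgE x) !linear_sum; apply: eq_bigr => p _.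
by rewrite monalgUZ !linearZ /= fg.
Qed.

Lemma malg_sum_linear (K : choiceType) (F : K -> V) :
  linear (fun x : {malg R[K]} => \sum_(p <- msupp x) x@_p *: F p).
Proof.
have sumEw (x : {malg R[K]}) d : (msupp x `<=` d)%fset ->
    \sum_(p <- msupp x) x@_p *: F p = \sum_(p <- d) x@_p *: F p.
  move=> xd; rewrite (big_fset_incl _ xd) //= => p _ /mcoeff_outdom ->.
  by rewrite scale0r.
move=> c x y; set d := (msupp x `|` msupp y)%fset.
have xyd : (msupp (c *: x + y) `<=` d)%fset.
  exact/(fsubset_trans (msuppD_le _ _))/fsetSU/msuppZ_le.
rewrite (sumEw _ _ xyd) (sumEw x d (fsubsetUl _ _)) (sumEw y d (fsubsetUr _ _)).
rewrite scaler_sumr -big_split; apply: eq_bigr => p _ /=.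
by rewrite mcoeffD mcoeffZ scalerDl scalerA.
Qed.

Variables (K1 K2 : choiceType).

Definition malg_bilin (h : K1 -> K2 -> V) (x : {malg R[K1]}) (y : {malg R[K2]}) : V :=
  \sum_(p <- msupp x) \sum_(q <- msupp y) (x@_p * y@_q) *: h p q.

Lemma malg_bilin_bilinear h : bilinear_for *:%R *:%R (malg_bilin h).
Proof.
split=> [y c x x'|x c y y'].
  have bilinE z : malg_bilin h z y =
      \sum_(p <- msupp z) z@_p *: \sum_(q <- msupp y) y@_q *: h p q.
    by apply: eq_bigr => p _; rewrite scaler_sumr; apply: eq_bigr => q _; rewrite scalerA.
  by rewrite !bilinE malg_sum_linear.
have bilinE z : malg_bilin h x z =
    \sum_(q <- msupp z) z@_q *: \sum_(p <- msupp x) x@_p *: h p q.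
  rewrite /malg_bilin exchange_big; apply: eq_bigr => q _; rewrite scaler_sumr.
  by apply: eq_bigr => p _; rewrite scalerA mulrC.
by rewrite !bilinE malg_sum_linear.
Qed.

Lemma malg_bilinU h p q : malg_bilin h << p >> << q >> = h p q.
Proof. by rewrite /malg_bilin !msuppU oner_eq0 !big_seq_fset1 !mcoeffUU mulr1 scale1r. Qed.

Lemma malg_bilinear_ext (f g : {malg R[K1]} -> {malg R[K2]} -> V) :
  bilinear_for *:%R *:%R f -> bilinear_for *:%R *:%R g ->
  (forall p q, f << p >> << q >> = g << p >> << q >>) -> forall x y, f x y = g x y.
Proof.
move=> [fl fr] [gl gr] fg x y; apply: (malg_linear_ext (fl y) (gl y)) => p.
exact: (malg_linear_ext (fr _) (gr _)).
Qed.

End MalgLinear.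

Lemma malg_linear_mulr (R : comNzRingType) (K : monomType) (w : {malg R[K]}) :
  linear (fun x => x * w).
Proof. by move=> c x y; rewrite mulrDl scalerAl. Qed.

Lemma malg_linear_mull (R : comNzRingType) (K : monomType) (w : {malg R[K]}) :
  linear (fun x => w * x).
Proof. by move=> c x y; rewrite mulrDr malg_scalerAr. Qed.

Lemma malg_commutator_bilinear (R : comNzRingType) (K : monomType) :
  bilinear_for *:%R *:%R (fun x y : {malg R[K]} => x * y - y * x).
Proof.
by split=> z c x y /=;
  rewrite mulrDl mulrDr -scalerAl -malg_scalerAr scalerBr opprD addrACA.
Qed.

Lemma malg_derivation (R : comNzRingType) (K : monomType) (D : {malg R[K]} -> {malg R[K]}) :
  linear D -> (forall p q, D (<< p >> * << q >>) = D << p >> * << q >> + << p >> * D << q >>) ->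
  derivation D.
Proof.
move=> DL Dpq; apply: malg_bilinear_ext => //.
  by split=> ? ? ? ? /=; rewrite ?mulrDl ?mulrDr -?scalerAl -?malg_scalerAr DL.
by split=> ? ? ? ? /=;
  rewrite DL ?mulrDl ?mulrDr -?scalerAl -?malg_scalerAr scalerDr addrACA.
Qed.

Section PureTensors.
(* [ts a X] is the pure tensor a X of A (x) L. *)
Variables (R : comNzRingType) (A : comAlgType R) (L V : lmodType R).
Variables (ts : {bilinear A -> L -> V}) (vb vg : {bilinear V -> V -> V}).
Variables (tb gr : L -> L -> L) (rh : L -> A -> A).
Hypothesis vb_ts : forall a b X Y, vb (ts a X) (ts b Y) = ts (a * b) (tb X Y).
Hypothesis vg_ts :
  forall a b X Y, vg (ts a X) (ts b Y) = ts (a * rh X b) Y + ts (a * b) (gr X Y).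

Lemma postLie_derivation_pure a b c X Y Z :
  derivation (rh X) -> gr X (tb Y Z) = tb (gr X Y) Z + tb Y (gr X Z) ->
  vg (ts a X) (vb (ts b Y) (ts c Z)) =
    vb (vg (ts a X) (ts b Y)) (ts c Z) + vb (ts b Y) (vg (ts a X) (ts c Z)).
Proof.
move=> dX grXtb; rewrite vb_ts !vg_ts linearDl linearDr !vb_ts dX grXtb.
have -> : a * (rh X b * c + b * rh X c) = a * rh X b * c + b * (a * rh X c) by ring.
by rewrite linearDl linearDr [b * (a * c)]mulrCA !mulrA addrACA.
Qed.

Section BracketAxiom.
Variables (a b c : A) (X Y Z : L).

(* Coordinates along Z, X |> Z, Y |> Z and a remaining tree part. *)
Let expand z x y W := ts z Z + ts x (gr X Z) + ts y (gr Y Z) + ts (a * b * c) W.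

Let expandD z x y W z' x' y' W' :
  expand z x y W + expand z' x' y' W' = expand (z + z') (x + x') (y + y') (W + W').
Proof.
rewrite /expand !linearDl linearDr.
by rewrite addrACA [X in X + _ = _]addrACA [X in X + _ + _ = _]addrACA.
Qed.

Let expandN z x y W : - expand z x y W = expand (- z) (- x) (- y) (- W).
Proof. by rewrite /expand !opprD !linearNl linearNr. Qed.

Lemma postLie_bracket_pure :
  derivation (rh X) -> derivation (rh Y) ->
  rh (tb X Y) c = rh X (rh Y c) - rh (gr X Y) c - rh Y (rh X c) + rh (gr Y X) c ->
  gr (tb X Y) Z = gr X (gr Y Z) - gr (gr X Y) Z - gr Y (gr X Z) + gr (gr Y X) Z ->
  vg (vb (ts a X) (ts b Y)) (ts c Z) =
    vg (ts a X) (vg (ts b Y) (ts c Z)) - vg (vg (ts a X) (ts b Y)) (ts c Z)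
    - vg (ts b Y) (vg (ts a X) (ts c Z)) + vg (vg (ts b Y) (ts a X)) (ts c Z).
Proof.
move=> dX dY rhtb grtb.
have -> : vg (vb (ts a X) (ts b Y)) (ts c Z) =
    expand (a * b * rh (tb X Y) c) 0 0 (gr (tb X Y) Z).
  by rewrite vb_ts vg_ts /expand !linear0l !addr0.
have -> : vg (ts a X) (vg (ts b Y) (ts c Z)) =
    expand (a * rh X (b * rh Y c)) (a * (b * rh Y c)) (a * rh X (b * c)) (gr X (gr Y Z)).
  by rewrite vg_ts linearDr !vg_ts /expand [a * (b * c)]mulrA !addrA.
have -> : vg (vg (ts a X) (ts b Y)) (ts c Z) =
    expand (a * rh X b * rh Y c + a * b * rh (gr X Y) c) 0 (a * rh X b * c) (gr (gr X Y) Z).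
  by rewrite vg_ts linearDl !vg_ts /expand linear0l addr0 linearDl addrACA !addrA.
have -> : vg (ts b Y) (vg (ts a X) (ts c Z)) =
    expand (b * rh Y (a * rh X c)) (b * rh Y (a * c)) (b * (a * rh X c)) (gr Y (gr X Z)).
  rewrite vg_ts linearDr !vg_ts /expand [b * (a * c)]mulrCA [a * (b * c)]mulrA.
  by rewrite addrACA !addrA.
have -> : vg (vg (ts b Y) (ts a X)) (ts c Z) =
    expand (b * rh Y a * rh X c + b * a * rh (gr Y X) c) (b * rh Y a * c) 0 (gr (gr Y X) Z).
  rewrite vg_ts linearDl !vg_ts /expand linear0l addr0 linearDl [b * a]mulrC.
  by rewrite addrACA !addrA.
by rewrite !expandN !expandD grtb; congr expand; rewrite ?rhtb ?dX ?dY; ring.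
Qed.
End BracketAxiom.
End PureTensors.

(* [tens] and [vgr] unfold to instances of [malg_bilin]. *)
HB.instance Definition _ (k : fieldType) := bilinear_isBilinear.Build k
  (SPA k) (TPT k) (VAPT k) *:%R *:%R (@tens k) (malg_bilin_bilinear _).
HB.instance Definition _ (k : fieldType) := bilinear_isBilinear.Build k
  (TPT k) (TPT k) (TPT k) *:%R *:%R (@tbr k) (malg_commutator_bilinear _ _).
HB.instance Definition _ (k : fieldType) := bilinear_isBilinear.Build k
  (VAPT k) (VAPT k) (VAPT k) *:%R *:%R (@vbr k) (malg_commutator_bilinear _ _).
HB.instance Definition _ (k : fieldType) gr rho := bilinear_isBilinear.Build k
  (VAPT k) (VAPT k) (VAPT k) *:%R *:%R (@vgr k gr rho) (malg_bilin_bilinear _).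

Section Tensor.
Variable k : fieldType.

Lemma tensU (p : amono) (q : word) : tens (<< p >> : SPA k) << q >> = << (p, q) : apmono >>.
Proof. exact: (malg_bilinU (fun (p : amono) (q : word) => << (p, q) : apmono >>)). Qed.

Lemma tensM (a b : SPA k) (X Y : TPT k) : tens a X * tens b Y = tens (a * b) (X * Y).
Proof.
move: a X; apply: malg_bilinear_ext => [||p q].
- by split=> ? ? ? ?; rewrite /= (linearPl, linearPr) mulrDl -scalerAl.
- by split=> ? ? ? ?; rewrite /= mulrDl -scalerAl (linearPl, linearPr).
move: b Y; apply: malg_bilinear_ext => [||p' q'].
- by split=> ? ? ? ?; rewrite /= (linearPl, linearPr) mulrDr -malg_scalerAr.
- by split=> ? ? ? ?; rewrite /= mulrDr -malg_scalerAr (linearPl, linearPr).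
by rewrite !monalgUM !tensU monalgUM.
Qed.

Lemma vbr_tens (a b : SPA k) (X Y : TPT k) :
  vbr (tens a X) (tens b Y) = tens (a * b) (tbr X Y).
Proof. by rewrite /vbr !tensM [b * a]mulrC linearBr. Qed.

End Tensor.

Lemma perm_enum_msetD (K : choiceType) (A B : {mset K}%mset) :
  perm_eq (A `+` B)%mset (enum_mset A ++ enum_mset B).
Proof. by apply/allP => x _ /=; rewrite count_cat !count_mem_mset msetE2. Qed.

Lemma msetBD1l (K : choiceType) (A B : {mset K}%mset) a :
  a \in A -> ((A `+` B) `\ a = (A `\ a) `+` B)%mset.
Proof.
move=> aA; apply/msetP => x; rewrite !msetE2 !msetnE.
case: (eqVneq x a) => [->|_]; last by rewrite !subn0.
by move: aA; rewrite in_mset; case: (A a) => // n _; rewrite addSn !subn1.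
Qed.

Lemma rho_tree_msetD (k : fieldType) t (p q : amono) :
  rho_tree k t (p `+` q)%mset = rho_tree k t p * << q >> + << p >> * rho_tree k t q.
Proof.
rewrite /rho_tree (perm_big _ (perm_enum_msetD p q)) big_cat /=.
rewrite mulr_suml mulr_sumr; congr (_ + _).
  rewrite big_seq [RHS]big_seq; apply: eq_bigr => a ap.
  rewrite mulr_suml; apply: eq_bigr => -[|v b] _; first by rewrite mul0r.
  by rewrite monalgUM (msetBD1l _ ap) msetDAC.
rewrite big_seq [RHS]big_seq; apply: eq_bigr => a aq.
rewrite mulr_sumr; apply: eq_bigr => -[|v b] _; first by rewrite mulr0.
by rewrite monalgUM [(p `+` q)%mset]msetDC (msetBD1l _ aq) msetDAC msetDC.
Qed.

Section LieDegree.
Variable k : fieldType.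

(* [lie_le n X]: X is a linear combination of Lie monomials in at most n trees.  Grafting
   by a Lie polynomial preserves this bound, which makes the bracket case of the
   induction below well founded. *)
Inductive lie_le : nat -> TPT k -> Prop :=
| lie_le_tree t : lie_le 1 (tree_el k t)
| lie_le_zero : lie_le 0 0
| lie_le_lin n a X Y : lie_le n X -> lie_le n Y -> lie_le n (a *: X + Y)
| lie_le_mono n m X : lie_le n X -> (n <= m)%N -> lie_le m X
| lie_le_tbr n m X Y : lie_le n X -> lie_le m Y -> lie_le (n + m) (tbr X Y).

Lemma lie_le0 n : lie_le n 0.
Proof. exact: lie_le_mono lie_le_zero _. Qed.

Lemma lie_leD n X Y : lie_le n X -> lie_le n Y -> lie_le n (X + Y).
Proof. by move=> hX hY; have := lie_le_lin 1 hX hY; rewrite scale1r. Qed.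

Lemma lie_leB n X Y : lie_le n X -> lie_le n Y -> lie_le n (X - Y).
Proof.
move=> hX hY; apply: lie_leD => //.
by have := lie_le_lin (-1) hY (lie_le0 n); rewrite scaleN1r addr0.
Qed.

Lemma lie_le_sum n (I : Type) (r : seq I) (F : I -> TPT k) :
  (forall i, lie_le n (F i)) -> lie_le n (\sum_(i <- r) F i).
Proof.
move=> hF; elim: r => [|i r IHr]; first by rewrite big_nil; apply: lie_le0.
by rewrite big_cons; apply: lie_leD.
Qed.

Lemma isLie_lie_le X : isLie X -> exists n, lie_le n X.
Proof.
elim=> [t||a X1 X2 _ [n h1] _ [m h2]|X1 X2 _ [n h1] _ [m h2]].
- by exists 1%N; apply: lie_le_tree.
- by exists 0%N; apply: lie_le_zero.
- exists (maxn n m); apply: lie_le_lin.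
    by apply: lie_le_mono h1 _; rewrite leq_maxl.
  by apply: lie_le_mono h2 _; rewrite leq_maxr.
- by exists (n + m)%N; apply: lie_le_tbr.
Qed.

Lemma lie_le_isLie n X : lie_le n X -> isLie X.
Proof.
elim=> [t||_ a X1 X2 _ h1 _ h2|//|_ _ X1 X2 _ h1 _ h2].
- exact: isLie_tree.
- exact: isLie_zero.
- exact: isLie_lin.
- exact: isLie_br.
Qed.

Lemma lie_le0_eq0 n X : lie_le n X -> n = 0%N -> X = 0.
Proof.
elim=> // [n' a X1 X2 _ IH1 _ IH2 n0|n' m X1 _ IH + n0|n1 n2 X1 X2 _ IH1 _ IH2].
- by rewrite IH1 // IH2 // scaler0 addr0.
- by rewrite n0 leqn0 => /eqP.
- by move/eqP; rewrite addn_eq0 => /andP[/eqP/IH1 -> _]; rewrite linear0l.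
Qed.

Lemma lie_le_strong_ind (P : TPT k -> Prop) :
  P 0 -> (forall t, P (tree_el k t)) -> (forall a X Y, P X -> P Y -> P (a *: X + Y)) ->
  (forall n m X Y, lie_le n X -> lie_le m Y -> (0 < n)%N -> (0 < m)%N ->
     (forall l Z, (l < n + m)%N -> lie_le l Z -> P Z) -> P (tbr X Y)) ->
  forall n X, lie_le n X -> P X.
Proof.
move=> P0 Ptree Plin Ptbr.
have step N : (forall n X, (n < N)%N -> lie_le n X -> P X) ->
    forall n X, (n <= N)%N -> lie_le n X -> P X.
  move=> IH n X + hX; elim: hX => //
    [n' a X1 X2 _ IH1 _ IH2|n' m X1 _ IH1 nm|n1 n2 X1 X2 h1 _ h2 _] le.
  - exact: Plin (IH1 le) (IH2 le).
  - exact: IH1 (leq_trans nm le).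
  have [n10|n1_gt0] := posnP n1; first by rewrite (lie_le0_eq0 h1 n10) linear0l.
  have [n20|n2_gt0] := posnP n2; first by rewrite (lie_le0_eq0 h2 n20) linear0r.
  by apply: Ptbr h1 h2 n1_gt0 n2_gt0 _ => l Z lt; apply: IH; apply: leq_trans le.
suff strong N n X : (n <= N)%N -> lie_le n X -> P X by move=> n X; apply: strong (leqnn n).
elim: N n X => [|N IHN]; apply: step => n X; first by rewrite ltn0.
by rewrite ltnS; apply: IHN.
Qed.
End LieDegree.

Section GraftingOperations.
Variables (k : fieldType) (gr : TPT k -> TPT k -> TPT k) (rho : TPT k -> SPA k -> SPA k).
Hypothesis ops : grafting_ops gr rho.

Lemma gr_bilinear : bilinear_for *:%R *:%R gr.
Proof. by case: ops => grL _; split=> z a X Y; case: (grL a X Y z). Qed.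
HB.instance Definition _ := bilinear_isBilinear.Build k
  (TPT k) (TPT k) (TPT k) *:%R *:%R gr gr_bilinear.

Lemma rho_bilinear : bilinear_for *:%R *:%R rho.
Proof.
case: ops => _ [_ [_ [_ [rhoL _]]]]; split=> [al a X Y|X a al be]; first by case: (rhoL a X Y al).
by case: (rhoL a X X (a *: al)) => _ [_ ->]; case: (rhoL a X X al) => _ [->].
Qed.
HB.instance Definition _ := bilinear_isBilinear.Build k
  (TPT k) (SPA k) (SPA k) *:%R *:%R rho rho_bilinear.

Lemma gr_tree_el t1 t2 : gr (tree_el k t1) (tree_el k t2) = graftT k t1 t2.
Proof. by case: ops => _ []. Qed.

Lemma gr_tbrr X Y Z : isLie X -> isLie Y -> isLie Z ->
  gr X (tbr Y Z) = tbr (gr X Y) Z + tbr Y (gr X Z).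
Proof. by case: ops => _ [_ [grD _]]; apply: grD. Qed.

Lemma gr_tbrl X Y Z : isLie X -> isLie Y -> isLie Z ->
  gr (tbr X Y) Z = gr X (gr Y Z) - gr (gr X Y) Z - gr Y (gr X Z) + gr (gr Y X) Z.
Proof. by case: ops => _ [_ [_ [grB _]]]; apply: grB. Qed.

Lemma rho_tree_el t m : rho (tree_el k t) << m >> = rho_tree k t m.
Proof. by case: ops => _ [_ [_ [_ [_ []]]]]. Qed.

Lemma rho_tbr X Y al : isLie X -> isLie Y ->
  rho (tbr X Y) al = rho X (rho Y al) - rho (gr X Y) al - rho Y (rho X al) + rho (gr Y X) al.
Proof. by case: ops => _ [_ [_ [_ [_ [_ rhoB]]]]]; apply: rhoB. Qed.

Lemma gr_tree_lie_le t m Y : lie_le m Y -> lie_le m (gr (tree_el k t) Y).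
Proof.
elim=> {m Y} [t'||n a X Y _ IH1 _ IH2|n m X _ IH nm|n m X Y hX IH1 hY IH2].
- by rewrite gr_tree_el; apply: lie_le_sum => s; apply: lie_le_tree.
- by rewrite linear0r; apply: lie_le_zero.
- by rewrite linearPr; apply: lie_le_lin.
- exact: lie_le_mono IH nm.
rewrite gr_tbrr; [|exact: isLie_tree|exact: lie_le_isLie hX|exact: lie_le_isLie hY].
by apply: lie_leD; apply: lie_le_tbr.
Qed.

Lemma gr_lie_le X : isLie X -> forall m Y, lie_le m Y -> lie_le m (gr X Y).
Proof.
case/isLie_lie_le=> n; move: n X; apply: lie_le_strong_ind.
- by move=> m Y _; rewrite linear0l; apply: lie_le0.
- exact: gr_tree_lie_le.
- by move=> a X1 X2 IH1 IH2 m Y hY; rewrite linearPl; apply: lie_le_lin; [apply: IH1|apply: IH2].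
move=> n1 n2 X1 X2 h1 h2 n1_gt0 n2_gt0 IH m Z hZ.
have IH1 := IH n1 X1 ltac:(lia) h1; have IH2 := IH n2 X2 ltac:(lia) h2.
rewrite gr_tbrl; [|exact: lie_le_isLie h1|exact: lie_le_isLie h2|exact: lie_le_isLie hZ].
apply: lie_leD; [apply: lie_leB; [apply: lie_leB|]|].
- exact/IH1/IH2.
- exact: IH n2 (gr X1 X2) ltac:(lia) (IH1 _ _ h2) _ _ hZ.
- exact/IH2/IH1.
- exact: IH n1 (gr X2 X1) ltac:(lia) (IH2 _ _ h1) _ _ hZ.
Qed.

Lemma gr_isLie X Y : isLie X -> isLie Y -> isLie (gr X Y).
Proof. by move=> hX /isLie_lie_le[m hY]; exact: lie_le_isLie (gr_lie_le hX hY). Qed.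

Lemma rho_tree_derivation t : derivation (rho (tree_el k t)).
Proof.
apply: malg_derivation => [|p q]; first exact: rho_bilinear.2.
rewrite monalgUM; apply: etrans (rho_tree_el t _) _.
by rewrite rho_tree_msetD -!rho_tree_el.
Qed.

Lemma rho_derivation X : isLie X -> derivation (rho X).
Proof.
case/isLie_lie_le=> n; move: n X; apply: lie_le_strong_ind.
- by move=> a b; rewrite !linear0l mul0r mulr0 addr0.
- exact: rho_tree_derivation.
- move=> c X1 X2 d1 d2 a b; rewrite !linearPl /= d1 d2.
  by rewrite mulrDl mulrDr -scalerAl -scalerAr scalerDr addrACA.
move=> n1 n2 X1 X2 h1 h2 n1_gt0 n2_gt0 IH a b.
have L1 := lie_le_isLie h1; have L2 := lie_le_isLie h2.
have d1 := IH n1 X1 ltac:(lia) h1; have d2 := IH n2 X2 ltac:(lia) h2.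
have d12 := IH n2 _ ltac:(lia) (gr_lie_le L1 h2).
have d21 := IH n1 _ ltac:(lia) (gr_lie_le L2 h1).
rewrite !rho_tbr //.
exact: (derivation_commutator_combination (linearDr rho X1) (linearDr rho X2) d1 d2 d12 d21).
Qed.

Lemma vgr_tens a b X Y :
  vgr gr rho (tens a X) (tens b Y) = tens (a * rho X b) Y + tens (a * b) (gr X Y).
Proof.
move: a X; apply: malg_bilinear_ext => [||p q].
- by split=> ? ? ? ? /=; rewrite (linearPl, linearPr) linearPl.
(* Not by rewriting: the products inside [tens] reach [amono] through its monomial
   structure, [tens] through its choice structure, and unifying the two diverges. *)
- split=> [X|a]; apply: linear_add.
  + exact: linear_comp (linearPl (@tens k) Y) (malg_linear_mulr (rho X b)).
  + exact: linear_comp (linearPl (@tens k) (gr X Y)) (malg_linear_mulr b).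
  + exact: linear_comp (linearPl (@tens k) Y)
             (linear_comp (malg_linear_mull a) (linearPl rho b)).
  + exact: linear_comp (linearPr (@tens k) (a * b)) (linearPl gr Y).
move: b Y; apply: malg_bilinear_ext => [||p' q'].
- by split=> ? ? ? ? /=; rewrite (linearPl, linearPr) linearPr.
- split=> [Y|b]; apply: linear_add.
  + exact: linear_comp (linearPl (@tens k) Y)
             (linear_comp (malg_linear_mull << p >>) (linearPr rho << q >>)).
  + exact: linear_comp (linearPl (@tens k) (gr << q >> Y)) (malg_linear_mull << p >>).
  + exact: linearPr (@tens k) (<< p >> * rho << q >> b).
  + exact: linear_comp (linearPr (@tens k) (<< p >> * b)) (linearPr gr << q >>).
by rewrite !tensU; exact: malg_bilinU.
Qed.

End GraftingOperations.

Section AromaticTrees.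
Variable k : fieldType.

Lemma inAPT_tens (a : SPA k) X : isLie X -> inAPT (tens a X).
Proof. by move=> LX; exists [:: (a, X)]; split=> [u|]; rewrite ?big_seq1 // inE => /eqP ->. Qed.

Lemma inAPT_add (x y : VAPT k) : inAPT x -> inAPT y -> inAPT (x + y).
Proof.
move=> [s [Ls ->]] [r [Lr ->]]; exists (s ++ r); rewrite big_cat; split=> // u.
by rewrite mem_cat => /orP[/Ls|/Lr].
Qed.

Lemma inAPT_ind (P : VAPT k -> Prop) :
  (forall a X, isLie X -> P (tens a X)) -> (forall x y, P x -> P y -> P (x + y)) ->
  forall x, inAPT x -> P x.
Proof.
move=> Ptens PD x [s [Ls ->]]; elim: s Ls => [|[a X] s IHs] Ls.
  by rewrite big_nil -(linear0l (@tens k) 0); apply/Ptens/isLie_zero.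
rewrite big_cons; apply: PD; first by apply/Ptens/(Ls (a, X)); rewrite inE eqxx.
by apply: IHs => u us; apply: Ls; rewrite inE us orbT.
Qed.

Lemma inAPT_scale c (x : VAPT k) : inAPT x -> inAPT (c *: x).
Proof.
elim/inAPT_ind=> [a X LX|x1 x2 IH1 IH2]; last by rewrite scalerDr; apply: inAPT_add.
by rewrite -linearZl_LR; apply: inAPT_tens.
Qed.

Lemma inAPT_bilinear (f : {bilinear VAPT k -> VAPT k -> VAPT k}) :
  (forall a b X Y, isLie X -> isLie Y -> inAPT (f (tens a X) (tens b Y))) ->
  forall x y, inAPT x -> inAPT y -> inAPT (f x y).
Proof.
move=> fpure x y Ax Ay; elim/inAPT_ind: Ax y Ay => [a X LX|x1 x2 IH1 IH2] y Ay.
  by elim/inAPT_ind: Ay => [b Y LY|y1 y2]; [apply: fpure | rewrite linearDr; apply: inAPT_add].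
by rewrite linearDl; apply: inAPT_add; [apply: IH1 | apply: IH2].
Qed.

Lemma inAPT_additive3_eq (F G : VAPT k -> VAPT k -> VAPT k -> VAPT k) :
  additive3 F -> additive3 G ->
  (forall a b c X Y Z, isLie X -> isLie Y -> isLie Z ->
     F (tens a X) (tens b Y) (tens c Z) = G (tens a X) (tens b Y) (tens c Z)) ->
  forall x y z, inAPT x -> inAPT y -> inAPT z -> F x y z = G x y z.
Proof.
move=> [Fx Fy Fz] [Gx Gy Gz] FGpure x y z Ax Ay Az.
elim/inAPT_ind: Ax y z Ay Az => [a X LX|x1 x2 IH1 IH2] y z Ay Az; last first.
  by rewrite Fx Gx IH1 ?IH2.
elim/inAPT_ind: Ay z Az => [b Y LY|y1 y2 IH1 IH2] z Az; last by rewrite Fy Gy IH1 ?IH2.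
elim/inAPT_ind: Az => [c Z LZ|z1 z2 IH1 IH2]; last by rewrite Fz Gz IH1 IH2.
exact: FGpure.
Qed.

End AromaticTrees.

Section PostLie.
Variables (k : fieldType) (gr : TPT k -> TPT k -> TPT k) (rho : TPT k -> SPA k -> SPA k).
Hypothesis ops : grafting_ops gr rho.

Lemma inAPT_vbr (x y : VAPT k) : inAPT x -> inAPT y -> inAPT (vbr x y).
Proof.
apply: inAPT_bilinear => a b X Y LX LY.
by rewrite /= vbr_tens; apply/inAPT_tens/isLie_br.
Qed.

Lemma inAPT_vgr (x y : VAPT k) : inAPT x -> inAPT y -> inAPT (vgr gr rho x y).
Proof.
apply: inAPT_bilinear => a b X Y LX LY /=.
rewrite (vgr_tens ops); apply: inAPT_add; apply: inAPT_tens => //.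
exact: (gr_isLie ops LX LY).
Qed.

Lemma postLie_derivation_APT (x y z : VAPT k) : inAPT x -> inAPT y -> inAPT z ->
  vgr gr rho x (vbr y z) = vbr (vgr gr rho x y) z + vbr y (vgr gr rho x z).
Proof.
move: x y z; apply: inAPT_additive3_eq (additive3_derivation_lhs _ _)
  (additive3_derivation_rhs _ _) _ => a b c X Y Z LX LY LZ.
exact: postLie_derivation_pure (@vbr_tens k) (vgr_tens ops) _ _ _ _ _ _
  (rho_derivation ops LX) (gr_tbrr ops LX LY LZ).
Qed.

Lemma postLie_bracket_APT (x y z : VAPT k) : inAPT x -> inAPT y -> inAPT z ->
  vgr gr rho (vbr x y) z = vgr gr rho x (vgr gr rho y z) - vgr gr rho (vgr gr rho x y) z
    - vgr gr rho y (vgr gr rho x z) + vgr gr rho (vgr gr rho y x) z.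
Proof.
move: x y z; apply: inAPT_additive3_eq (additive3_bracket_lhs _ _)
  (additive3_bracket_rhs _) _ => a b c X Y Z LX LY LZ.
exact (postLie_bracket_pure (@vbr_tens k) (vgr_tens ops) a b (rho_derivation ops LX)
  (rho_derivation ops LY) (rho_tbr ops c LX LY) (gr_tbrl ops LX LY LZ)).
Qed.

End PostLie.

Theorem mainTheorem2 (k : fieldType)
    (gr : TPT k -> TPT k -> TPT k) (rho : TPT k -> SPA k -> SPA k) :
  grafting_ops gr rho ->
  is_post_Lie (@inAPT k) (@vbr k) (vgr gr rho).
Proof.
move=> ops; split.
  split=> [|a x y Ax Ay]; last exact/inAPT_add/Ay/inAPT_scale.
  by rewrite -(linear0l (@tens k) 0); apply/inAPT_tens/isLie_zero.
split; first by move=> x y Ax Ay; split; [apply: inAPT_vbr | apply: (inAPT_vgr ops)].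
split; first by move=> a x y z _ _ _; split; rewrite (linearPl, linearPr).
split; first by move=> x _; rewrite /vbr subrr.
split; first by move=> x y z _ _ _; apply: commutator_jacobi.
by split=> x y z Ax Ay Az; [apply: (postLie_derivation_APT ops) | apply: (postLie_bracket_APT ops)].
Qed.
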